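(* In the D-RR setting under the strongly convex assumptions, suppose that for all $t$ $$\alpha_t\le\sqrt{\frac{2-\rho_w^2}{24\rho_w^2(5-\rho_w^2)}}\,\frac{1-\rho_w^2}{L}$$ (the right-hand side being $+\infty$ if $\rho_w=0$). Then for all $t\ge0$ and $\ell\in\{0,\dots,m-1\}$, $$\mathbb{E}\|\mathbf{x}_t^{\ell+1}-\mathbf 1(\bar x_t^{\ell+1})^\intercal\|^2\le\frac{1+\rho_w^2}{2}\mathbb{E}\|\mathbf{x}_t^{\ell}-\mathbf 1(\bar x_t^{\ell})^\intercal\|^2+\frac{30\alpha_t^2nL^2}{1-\rho_w^2}\mathbb{E}\|\bar x_t^\ell-\bar x_*^\ell\|^2+\frac{15n\rho_w^2\alpha_t^2}{1-\rho_w^2}\big(\sigma_*^2+2L\sigma^2_{\mathrm{shuffle}}\big).$$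
   Context: D-RR setting. Let $n,m,p\ge1$ be integers and $[k]=\{1,\dots,k\}$. For $i\in[n]$, $\ell\in[m]$ let $f_{i,\ell}:\mathbb{R}^p\to\mathbb{R}$ be differentiable; $f_i:=\frac1m\sum_{\ell=1}^m f_{i,\ell}$, $f:=\frac1n\sum_{i=1}^n f_i$. Let $W=(w_{ij})\in\mathbb{R}^{n\times n}$ be nonnegative, symmetric, with $W\mathbf 1=\mathbf 1$, compliant with an undirected connected graph on $[n]$ (for $i\ne j$, $w_{ij}>0$ iff $\{i,j\}$ is an edge); $\rho_w$ is the spectral norm of $W-\frac1n\mathbf 1\mathbf 1^\intercal$ (so $\rho_w<1$). The D-RR algorithm: given deterministic initial points $x_{i,0}\in\mathbb{R}^p$ and stepsizes $\alpha_t>0$, at each epoch $t=0,1,\dots$ each agent $i$ draws a permutation $(\pi^i_0,\dots,\pi^i_{m-1})$ of $[m]$ uniformly at random, independently across agents and epochs; sets $x^0_{i,t}=x_{i,t}$; for $\ell=0,\dots,m-1$ sets $x^{\ell+1}_{i,t}=\sum_{j=1}^n w_{ij}\big(x^\ell_{j,t}-\alpha_t\nabla f_{j,\pi^j_\ell}(x^\ell_{j,t})\big)$; sets $x_{i,t+1}=x^m_{i,t}$. Notation: $\mathbf{x}_t^\ell\in\mathbb{R}^{n\times p}$ has $i$-th row $(x^\ell_{i,t})^\intercal$; $\bar x_t^\ell=\frac1n\sum_i x^\ell_{i,t}$; $\mathbf 1(\bar x_t^\ell)^\intercal$ is the $n\times p$ matrix all of whose rows equal $(\bar x_t^\ell)^\intercal$;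 $\|\cdot\|$ is Euclidean/Frobenius norm; $\mathbb{E}$ is expectation over all permutations. Strongly convex assumptions: each $f_{i,\ell}$ is $\mu$-strongly convex with $L$-Lipschitz gradient ($0<\mu\le L$); $x^*$ is the unique minimizer of $f$; $\sigma_*^2:=\frac{1}{mn}\sum_{i,\ell}\|\nabla f_{i,\ell}(x^* )\|^2$. For epoch $t$ define $\bar x_*^\ell:=x^*-\alpha_t\sum_{k=0}^{\ell-1}\frac1n\sum_{i=1}^n\nabla f_{i,\pi^i_k}(x^* )$ ($\ell=0,\dots,m$), $\bar s_\ell:=\frac1n\sum_i f_{i,\pi^i_\ell}$, and $\sigma^2_{\mathrm{shuffle}}:=\max_{\ell=0,\dots,m-1}\mathbb{E}\big[\bar s_\ell(\bar x_*^\ell)-\bar s_\ell(x^* )-\langle\nabla\bar s_\ell(x^* ),\bar x_*^\ell-x^*\rangle\big]$. *)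

From HB Require Import structures.
From mathcomp Require Import all_boot all_order all_algebra all_fingroup.
From mathcomp Require Import all_classical all_reals all_analysis.
Set Implicit Arguments. Unset Strict Implicit. Unset Printing Implicit Defensive.
Import Order.TTheory GRing.Theory Num.Theory.
Import numFieldNormedType.Exports.
Local Open Scope ring_scope.
Local Open Scope classical_set_scope.

Section DRR.
Variable R : realType.

Definition vdot (p : nat) (u v : 'rV[R]_p) : R := \sum_(j < p) u 0 j * v 0 j.
Definition vsq (p : nat) (u : 'rV[R]_p) : R := vdot u u.
Definition fsq (a b : nat) (X : 'M[R]_(a, b)) : R := \sum_(i < a) \sum_(j < b) X i j ^+ 2.

Definition spectral_norm (n : nat) (A : 'M[R]_n) : R :=
  sup [set Num.sqrt (fsq (A *m x)) | x in [set x : 'cV[R]_n | fsq x = 1]].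

Definition is_gradient (p : nat) (f : 'rV[R]_p -> R) (g : 'rV[R]_p -> 'rV[R]_p) :=
  forall x, differentiable f x /\ forall v, 'D_v f x = vdot (g x) v.

Definition strongly_convex_with (p : nat) (mu : R) (f : 'rV[R]_p -> R) g :=
  forall x y : 'rV[R]_p, f x + vdot (g x) (y - x) + mu / 2 * vsq (y - x) <= f y.

Definition lipschitz_with (p : nat) (L : R) (g : 'rV[R]_p -> 'rV[R]_p) :=
  forall x y, Num.sqrt (vsq (g x - g y)) <= L * Num.sqrt (vsq (x - y)).

Definition avg_row (n p : nat) (X : 'M[R]_(n, p)) : 'rV[R]_p :=
  n%:R^-1 *: \sum_(i < n) row i X.

Definition cons_err (n p : nat) (X : 'M[R]_(n, p)) : 'M[R]_(n, p) :=
  X - \matrix_(i < n) avg_row X.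

Variables (n m p : nat).

Definition drr_step (W : 'M[R]_n) (g : 'I_n -> 'I_m -> 'rV[R]_p -> 'rV[R]_p)
  (a : R) (s : {ffun 'I_n -> 'S_m}) (X : 'M[R]_(n, p)) (l : 'I_m) : 'M[R]_(n, p) :=
  W *m (X - a *: \matrix_(i < n) g i (s i l) (row i X)).

Definition drr_inner W g a s (X : 'M[R]_(n, p)) (l : nat) : 'M[R]_(n, p) :=
  foldl (drr_step W g a s) X (take l (enum 'I_m)).

(* sample space of the permutations of epochs 0..t of all agents *)
Definition sample (t : nat) := {ffun 'I_t.+1 -> {ffun 'I_n -> 'S_m}}.

Fixpoint drr_outer W g (alpha : nat -> R) (X0 : 'M[R]_(n, p)) (t : nat)
  (om : sample t) (k : nat) : 'M[R]_(n, p) :=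
  match k with
  | 0 => X0
  | k'.+1 => drr_inner W g (alpha k') (om (inord k'))
               (drr_outer W g alpha X0 om k') m
  end.

Definition Exp (T : finType) (Y : T -> R) : R := (\sum_(w : T) Y w) / #|T|%:R.

Definition xbar_star (g : 'I_n -> 'I_m -> 'rV[R]_p -> 'rV[R]_p) (a : R) (s : {ffun 'I_n -> 'S_m}) (xs : 'rV[R]_p) (l : nat) :=
  xs - a *: \sum_(k <- take l (enum 'I_m)) (n%:R^-1 *: \sum_(i < n) g i (s i k) xs).

Definition sigma_star_sq (g : 'I_n -> 'I_m -> 'rV[R]_p -> 'rV[R]_p) (xs : 'rV[R]_p) : R :=
  (m * n)%:R^-1 * \sum_(i < n) \sum_(l < m) vsq (g i l xs).

(* sigma_shuffle^2 for stepsize a; sbar_l = (1/n) sum_i f_{i,pi^i_l},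
   whose gradient is (1/n) sum_i grad f_{i,pi^i_l} *)
Definition sigma_shuffle_sq (F : 'I_n -> 'I_m -> 'rV[R]_p -> R) (g : 'I_n -> 'I_m -> 'rV[R]_p -> 'rV[R]_p) (a : R) (xs : 'rV[R]_p) : R :=
  \big[Num.max/0]_(l < m)
    Exp (fun s : {ffun 'I_n -> 'S_m} =>
      let sb := fun x => n%:R^-1 * \sum_(i < n) F i (s i l) x in
      let gsb := n%:R^-1 *: \sum_(i < n) g i (s i l) xs in
      let y := xbar_star g a s xs l in
      sb y - sb xs - vdot gsb (y - xs)).

End DRR.

(* As W is symmetric and stochastic, the consensus error of W Z is (W - J/n) applied to
   that of Z, so it contracts by rho.  Young's inequality with weight (1 - rho^2)/(2 + rho^2)
   separates the old consensus error from a^2 |G|^2, and |G|^2 is bounded row by row through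
   Lipschitz continuity and cocoercivity of the gradients around the shadow point xbar_*^l:
   this produces the consensus error again, the distance from the mean to xbar_*^l, the
   gradients at x*, and a Bregman divergence.  The stepsize condition brings the total
   coefficient of the consensus error down to (1 + rho^2)/2.  In expectation the permutation
   of epoch t is uniformly distributed, so the gradient term averages to n sigma_*^2, while the
   Bregman term is at most n sigma_shuffle^2 by definition. *)

From HB Require Import structures.
From mathcomp Require Import all_boot all_order all_algebra all_fingroup.
From mathcomp Require Import all_classical all_reals all_analysis.
From mathcomp Require Import ring lra.
Import Order.TTheory GRing.Theory Num.Theory.
Import numFieldNormedType.Exports.
Local Open Scope ring_scope.
Set Implicit Arguments. Unset Strict Implicit. Unset Printing Implicit Defensive.

Section Vectors.
Variables (R : realType) (p : nat).
Implicit Types (u v w x y z : 'rV[R]_p) (f : 'rV[R]_p -> R) (g : 'rV[R]_p -> 'rV[R]_p).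

Lemma vdotC u v : vdot u v = vdot v u.
Proof. by apply: eq_bigr => j _; rewrite mulrC. Qed.

Lemma vdotBl u v w : vdot (u - v) w = vdot u w - vdot v w.
Proof. by rewrite /vdot -sumrB; apply: eq_bigr => j _; rewrite !mxE mulrBl. Qed.

Lemma vdotZl (a : R) u w : vdot (a *: u) w = a * vdot u w.
Proof. by rewrite /vdot mulr_sumr; apply: eq_bigr => j _; rewrite !mxE mulrA. Qed.

Lemma vdotBr u v w : vdot w (u - v) = vdot w u - vdot w v.
Proof. by rewrite !(vdotC w) vdotBl. Qed.

Lemma vdotZr (a : R) u w : vdot w (a *: u) = a * vdot w u.
Proof. by rewrite !(vdotC w) vdotZl. Qed.

Lemma vdot_suml (I : finType) (F : I -> 'rV[R]_p) w :
  vdot (\sum_i F i) w = \sum_i vdot (F i) w.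
Proof.
by rewrite /vdot exchange_big /=; apply: eq_bigr => j _; rewrite summxE mulr_suml.
Qed.

Lemma vsq_ge0 u : 0 <= vsq u.
Proof. by apply: sumr_ge0 => j _; rewrite -expr2 sqr_ge0. Qed.

Lemma sqrD_le_young (a b c : R) : 0 < c ->
  (a + b) ^+ 2 <= (1 + c) * a ^+ 2 + (1 + c^-1) * b ^+ 2.
Proof.
move=> c_gt0.
have : 0 <= (c * a - b) ^+ 2 / c by rewrite divr_ge0 ?sqr_ge0 ?ltW.
have -> : (c * a - b) ^+ 2 / c = c * a ^+ 2 - 2 * a * b + c^-1 * b ^+ 2.
  by field; rewrite gt_eqF.
lra.
Qed.

Lemma vsqD_le_young u v (c : R) : 0 < c ->
  vsq (u + v) <= (1 + c) * vsq u + (1 + c^-1) * vsq v.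
Proof.
move=> c_gt0; rewrite /vsq /vdot !mulr_sumr -big_split /=; apply: ler_sum => j _.
by rewrite !mxE -!expr2; exact: sqrD_le_young.
Qed.

Lemma vdot_le_vsq u v (c : R) : 0 < c -> 2 * vdot u v <= c^-1 * vsq u + c * vsq v.
Proof.
move=> c_gt0; rewrite /vsq /vdot !mulr_sumr -big_split /=; apply: ler_sum => j _.
have : 0 <= (u 0 j - c * v 0 j) ^+ 2 / c by rewrite divr_ge0 ?sqr_ge0 ?ltW.
have -> : (u 0 j - c * v 0 j) ^+ 2 / c
        = c^-1 * (u 0 j * u 0 j) - 2 * (u 0 j * v 0 j) + c * (v 0 j * v 0 j).
  by field; rewrite gt_eqF.
lra.
Qed.

Lemma lipschitz_vsq (L : R) g x y : 0 <= L -> lipschitz_with L g ->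
  vsq (g x - g y) <= L ^+ 2 * vsq (x - y).
Proof.
move=> L_ge0 /(_ x y) lip.
rewrite -(sqr_sqrtr (vsq_ge0 (g x - g y))) -(sqr_sqrtr (vsq_ge0 (x - y))) -exprMn.
by rewrite ler_pXn2r // ?nnegrE ?mulr_ge0 ?sqrtr_ge0.
Qed.

Definition bregman f g x y := f y - f x - vdot (g x) (y - x).

Lemma strongly_convex_bregman_ge0 (mu : R) f g x y :
  0 <= mu -> strongly_convex_with mu f g -> 0 <= bregman f g x y.
Proof.
move=> mu_ge0 /(_ x y); rewrite /bregman.
have : 0 <= mu / 2 * vsq (y - x) by rewrite mulr_ge0 ?divr_ge0 ?vsq_ge0.
lra.
Qed.

Section Smooth.
Variables (L : R) (f : 'rV[R]_p -> R) (g : 'rV[R]_p -> 'rV[R]_p).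
Hypotheses (L_gt0 : 0 < L) (convex_f : forall x y, 0 <= bregman f g x y)
  (lip_g : lipschitz_with L g).

Lemma bregman_le_vsq x y : bregman f g x y <= L * vsq (y - x).
Proof.
have := convex_f y x; have := vdot_le_vsq (g y - g x) (y - x) L_gt0.
have : L^-1 * vsq (g y - g x) <= L * vsq (y - x).
  by rewrite ler_pdivrMl // mulrA -expr2 (lipschitz_vsq _ _ (ltW L_gt0) lip_g).
rewrite /bregman -[x - y]opprB -[- (y - x)]scaleN1r vdotZr vdotBl.
lra.
Qed.

(* Test convexity at x and the quadratic upper bound at y against z = y - (2 L)^-1 (g y - g x). *)
Lemma vsq_grad_sub_le_bregman x y : vsq (g y - g x) <= 4 * L * bregman f g x y.
Proof.
set d := g y - g x; set c := (2 * L)^-1; set z := y - c *: d.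
have c_gt0 : 0 < c by rewrite invr_gt0 mulr_gt0.
have lower_xz := convex_f x z; have upper_yz := bregman_le_vsq y z.
have ezx : z - x = (y - x) - c *: d by rewrite /z addrAC.
have ezy : z - y = - c *: d by rewrite /z addrAC subrr add0r scaleNr.
rewrite /bregman ezx vdotBr vdotZr in lower_xz.
rewrite /bregman ezy /vsq vdotZr vdotZl vdotZr in upper_yz.
have ed : c * vdot (g y) d - c * vdot (g x) d = c * vsq d by rewrite -mulrBr -vdotBl.
have eL : L * (- c * (- c * vsq d)) = c / 2 * vsq d by rewrite /c; field; rewrite gt_eqF.
have e4 : 4 * L * (c / 2) = 1 by rewrite /c; field; rewrite gt_eqF.
rewrite /vsq in ed eL *; rewrite /bregman.
have : c / 2 * vdot d d <= f y - f x - vdot (g x) (y - x) by lra.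
move/(ler_wpM2l (ltW (mulr_gt0 (ltr0n _ 4) L_gt0))).
by rewrite mulrA e4 mul1r.
Qed.

(* Young's inequality with weights 3/2 and 1/2 on g x = (g x - g y) + (g y - g z) + g z. *)
Lemma vsq_grad_le x y z :
  vsq (g x) <= 5 / 2 * L ^+ 2 * vsq (x - y) + 10 * L * bregman f g z y + 5 * vsq (g z).
Proof.
have e : g x = (g x - g y) + ((g y - g z) + g z) by rewrite !subrK.
have young1 := @vsqD_le_young (g x - g y) ((g y - g z) + g z) (3 / 2) ltac:(lra).
have young2 := @vsqD_le_young (g y - g z) (g z) (1 / 2) ltac:(lra).
have lip_xy := lipschitz_vsq x y (ltW L_gt0) lip_g.
have cocoercive_zy := vsq_grad_sub_le_bregman z y.
have c1 : 1 + (3 / 2 : R)^-1 = 5 / 3 by field.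
have c2 : 1 + (1 / 2 : R)^-1 = 3 by field.
rewrite -e c1 in young1; rewrite c2 in young2.
have := vsq_ge0 (g x - g y); have := vsq_ge0 (g y - g z).
lra.
Qed.

End Smooth.
End Vectors.

Section Expectation.
Variable R : realType.
Implicit Types (T A I : finType).

Lemma ler_Exp T (Y Z : T -> R) : (forall w, Y w <= Z w) -> Exp Y <= Exp Z.
Proof. by move=> YZ; rewrite /Exp ler_wpM2r ?invr_ge0 ?ler0n ?ler_sum. Qed.

Lemma ExpD T (Y Z : T -> R) : Exp (fun w => Y w + Z w) = Exp Y + Exp Z.
Proof. by rewrite /Exp big_split /= mulrDl. Qed.

Lemma ExpZ T (a : R) (Y : T -> R) : Exp (fun w => a * Y w) = a * Exp Y.
Proof. by rewrite /Exp -mulr_sumr mulrA. Qed.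

Lemma Exp_sum T I (Y : I -> T -> R) : Exp (fun w => \sum_i Y i w) = \sum_i Exp (Y i).
Proof. by rewrite /Exp exchange_big /= mulr_suml. Qed.

(* The injections make all fibres of X equally large, i.e. X is uniformly distributed. *)
Lemma Exp_comp_uniform T A (w0 : T) (X : T -> A) (phi : A -> R) :
  (forall a b : A, exists2 psi : T -> T,
     injective psi & forall w, X (psi w) = tperm a b (X w)) ->
  Exp (fun w => phi (X w)) = Exp phi.
Proof.
move=> tpermX; pose N a := #|[set w | X w == a]|.
have N_le a b : (N a <= N b)%N.
  have [psi psi_inj psiX] := tpermX a b.
  rewrite /N -(card_imset _ psi_inj); apply: subset_leq_card.
  by apply/fintype.subsetP => y /imsetP [w]; rewrite inE => /eqP Xw ->; rewrite inE psiX Xw tpermL.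
have sum_fibres (F : A -> R) : \sum_w F (X w) = (N (X w0))%:R * \sum_a F a.
  rewrite (partition_big X predT) //= mulr_sumr; apply: eq_bigr => a _.
  rewrite (eq_bigr (fun _ => F a)) => [|w /eqP <- //].
  rewrite (eq_bigl (fun w => w \in [set w | X w == a])) => [|w]; last by rewrite inE.
  rewrite sumr_const mulr_natl; congr (GRing.natmul _ _).
  by apply/anti_leq; rewrite !N_le.
have N_neq0 : (N (X w0))%:R != 0 :> R.
  by rewrite pnatr_eq0 -lt0n; apply/card_gt0P; exists w0; rewrite inE.
have cardT : #|T|%:R = (N (X w0))%:R * #|A|%:R :> R.
  by have := sum_fibres (fun _ => 1); rewrite !sumr_const !mulr_natl.
by rewrite /Exp sum_fibres cardT invfM mulrACA mulfV ?mul1r.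
Qed.

Lemma Exp_ffun_app I A (i : I) (a0 : A) (phi : A -> R) :
  Exp (fun f : {ffun I -> A} => phi (f i)) = Exp phi.
Proof.
apply: (Exp_comp_uniform [ffun=> a0]) => a b.
exists (fun f : {ffun I -> A} => [ffun k => if k == i then tperm a b (f k) else f k]).
  move=> f1 f2 /ffunP f12; apply/ffunP => k; have := f12 k; rewrite !ffunE.
  by case: (k == i) => //; apply: perm_inj.
by move=> f; rewrite ffunE eqxx.
Qed.

Lemma Exp_perm_app m (l : 'I_m) (phi : 'I_m -> R) :
  Exp (fun s : 'S_m => phi (s l)) = m%:R^-1 * \sum_j phi j.
Proof.
rewrite (Exp_comp_uniform 1%g) => [|a b]; first by rewrite /Exp card_ord mulrC.
by exists (fun s => (s * tperm a b)%g) => [|s]; [exact: mulIg | rewrite permM].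
Qed.

End Expectation.

Section Frobenius.
Variable R : realType.

Lemma fsq_ge0 a b (M : 'M[R]_(a, b)) : 0 <= fsq M.
Proof. by apply: sumr_ge0 => i _; apply: sumr_ge0 => j _; rewrite sqr_ge0. Qed.

Lemma fsqZ a b (c : R) (M : 'M[R]_(a, b)) : fsq (c *: M) = c ^+ 2 * fsq M.
Proof.
rewrite /fsq mulr_sumr; apply: eq_bigr => i _; rewrite mulr_sumr.
by apply: eq_bigr => j _; rewrite mxE exprMn.
Qed.

Lemma fsq_cols a b (M : 'M[R]_(a, b)) : fsq M = \sum_j fsq (col j M).
Proof.
rewrite /fsq exchange_big /=; apply: eq_bigr => j _.
by apply: eq_bigr => i _; rewrite big_ord1 mxE.
Qed.

Lemma fsq_rows a b (M : 'M[R]_(a, b)) : fsq M = \sum_i vsq (row i M).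
Proof. by apply: eq_bigr => i _; apply: eq_bigr => j _; rewrite !mxE expr2. Qed.

Lemma fsq_eq0 a b (M : 'M[R]_(a, b)) : (fsq M == 0) = (M == 0).
Proof.
apply/idP/eqP => [|->]; last by apply/eqP/big1 => i _; apply: big1 => j _; rewrite mxE expr0n.
rewrite psumr_eq0 => [/allP M0|i _]; last by apply: sumr_ge0 => j _; exact: sqr_ge0.
apply/matrixP => i j; have := M0 i (mem_index_enum _).
rewrite psumr_eq0 => [/allP/(_ j (mem_index_enum _))|]; last by move=> k _; exact: sqr_ge0.
by rewrite sqrf_eq0 mxE => /eqP.
Qed.

Lemma spectral_norm_ubound n (A : 'M[R]_n) :
  has_ubound [set Num.sqrt (fsq (A *m x)) | x in [set x : 'cV[R]_n | fsq x = 1]]%classic.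
Proof.
exists (Num.sqrt (\sum_i (\sum_k `|A i k|) ^+ 2)) => _ [x /= x1 <-].
rewrite ler_sqrt; last by apply: sumr_ge0 => i _; exact: sqr_ge0.
apply: ler_sum => i _; rewrite big_ord1.
have x_le1 k : `|x k 0| <= 1.
  have : x k 0 ^+ 2 <= 1.
    rewrite -x1 /fsq (bigD1 k) //= big_ord1 lerDl.
    by apply: sumr_ge0 => *; rewrite big_ord1 sqr_ge0.
  by move=> xk; rewrite ler_norml; apply/andP; split; nra.
rewrite -real_normK ?num_real // ler_pXn2r ?nnegrE ?sumr_ge0 //.
rewrite mxE; apply: (le_trans (ler_norm_sum _ _ _)); apply: ler_sum => k _.
by rewrite normrM ler_piMr.
Qed.

Lemma fsq_mulmx_le_spectral n (A : 'M[R]_n) (y : 'cV[R]_n) :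
  fsq (A *m y) <= spectral_norm A ^+ 2 * fsq y.
Proof.
have [->|y_neq0] := eqVneq y 0.
  have fsq0 : fsq (0 : 'cV[R]_n) = 0 by apply/eqP; rewrite fsq_eq0.
  by rewrite mulmx0 fsq0 mulr0.
have y_gt0 : 0 < fsq y by rewrite lt_def fsq_eq0 y_neq0 fsq_ge0.
set c := Num.sqrt (fsq y); have c_gt0 : 0 < c by rewrite sqrtr_gt0.
have Ay_le : Num.sqrt (fsq (A *m (c^-1 *: y))) <= spectral_norm A.
  apply: (ub_le_sup (spectral_norm_ubound A)); exists (c^-1 *: y) => //=.
  by rewrite fsqZ exprVn (sqr_sqrtr (ltW y_gt0)) mulVf ?gt_eqF.
have : fsq (A *m (c^-1 *: y)) <= spectral_norm A ^+ 2.
  rewrite -(sqr_sqrtr (fsq_ge0 _)) ler_pXn2r ?nnegrE ?sqrtr_ge0 //.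
  exact: le_trans (sqrtr_ge0 _) Ay_le.
by rewrite -scalemxAr fsqZ exprVn (sqr_sqrtr (ltW y_gt0)) ler_pdivrMl // mulrC.
Qed.

Lemma fsq_subZ_le_young a b (P Q : 'M[R]_(a, b)) (k c : R) : 0 < c ->
  fsq (P - k *: Q) <= (1 + c) * fsq P + (1 + c^-1) * k ^+ 2 * fsq Q.
Proof.
move=> c_gt0; rewrite /fsq !mulr_sumr -big_split; apply: ler_sum => i _.
rewrite !mulr_sumr -big_split; apply: ler_sum => j _ /=.
have := sqrD_le_young (P i j) (- (k * Q i j)) c_gt0.
by rewrite !mxE sqrrN exprMn !mulrA.
Qed.
End Frobenius.

Section Consensus.
Variables (R : realType) (n : nat).
Hypothesis n_gt0 : (0 < n)%N.

Let n_neq0 : n%:R != 0 :> R. Proof. by rewrite pnatr_eq0 -lt0n. Qed.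

Lemma sum_sqr_sub_mean (z : 'I_n -> R) (y : R) :
  \sum_i (z i - y) ^+ 2
  = \sum_i (z i - n%:R^-1 * \sum_k z k) ^+ 2 + n%:R * (n%:R^-1 * \sum_k z k - y) ^+ 2.
Proof.
set zbar := n%:R^-1 * \sum_k z k.
have sum_z : \sum_k z k = n%:R * zbar by rewrite /zbar mulrA mulfV ?mul1r.
rewrite (eq_bigr (fun i => (z i - zbar) ^+ 2 + ((zbar - y) * 2 * z i - (zbar - y) * (y + zbar))));
  last by move=> i _; ring.
by rewrite big_split /= sumrB -mulr_sumr sumr_const card_ord sum_z -mulr_natr; ring.
Qed.

Variable p : nat.
Implicit Types X Z : 'M[R]_(n, p).

Lemma cons_errE Z i j : cons_err Z i j = Z i j - n%:R^-1 * \sum_k Z k j.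
Proof. by rewrite /cons_err /avg_row !mxE summxE; under eq_bigr do rewrite !mxE. Qed.

Lemma fsq_cons_err_le Z : fsq (cons_err Z) <= fsq Z.
Proof.
rewrite /fsq exchange_big [X in _ <= X]exchange_big /=; apply: ler_sum => j _.
have := sum_sqr_sub_mean (fun i => Z i j) 0.
rewrite (eq_bigr (fun i => Z i j ^+ 2)) => [->|i _]; last by rewrite subr0.
under eq_bigr do rewrite cons_errE.
by rewrite lerDl mulr_ge0 ?ler0n ?sqr_ge0.
Qed.

Lemma sum_vsq_row_sub X (y : 'rV[R]_p) :
  \sum_i vsq (row i X - y) = fsq (cons_err X) + n%:R * vsq (avg_row X - y).
Proof.
rewrite /vsq /vdot /fsq exchange_big [X in _ = X + _]exchange_big /= mulr_sumr -big_split /=.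
apply: eq_bigr => j _.
under eq_bigr do rewrite !mxE -expr2.
rewrite (sum_sqr_sub_mean (fun i => X i j)); congr (_ + _).
  by apply: eq_bigr => i _; rewrite cons_errE.
by rewrite !mxE summxE expr2; under [in RHS]eq_bigr do rewrite mxE.
Qed.

Lemma cons_errBZ X Z (a : R) : cons_err (X - a *: Z) = cons_err X - a *: cons_err Z.
Proof.
apply/matrixP => i j; rewrite !(cons_errE, mxE).
under eq_bigr do rewrite !mxE.
by rewrite sumrB -mulr_sumr; ring.
Qed.

Section Mixing.
Variable W : 'M[R]_n.
Hypotheses (W_sym : W^T = W) (W_stoch : forall i, \sum_(j < n) W i j = 1).

Lemma cons_err_mulmx Z :
  cons_err (W *m Z) = (W - n%:R^-1 *: const_mx 1) *m cons_err Z.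
Proof.
have W_colsum k : \sum_(k' < n) W k' k = 1.
  by rewrite -(W_stoch k); apply: eq_bigr => k' _; rewrite -[in RHS]W_sym mxE.
apply/matrixP => i j; rewrite cons_errE !mxE.
set S := \sum_k Z k j.
have -> : \sum_k (W *m Z) k j = S.
  under eq_bigr do rewrite mxE.
  by rewrite exchange_big /=; apply: eq_bigr => k _; rewrite -mulr_suml W_colsum mul1r.
rewrite [RHS](eq_bigr (fun k => W i k * Z k j - n%:R^-1 * S * W i k - n%:R^-1 * Z k j
                               + n%:R^-1 * (n%:R^-1 * S))); last first.
  by move=> k _; rewrite cons_errE !mxE -/S; ring.
rewrite !big_split /= !sumrN -!mulr_sumr W_stoch sumr_const card_ord -/S -mulr_natr.
by field.
Qed.

Lemma fsq_cons_err_mulmx_le Z :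
  fsq (cons_err (W *m Z)) <= spectral_norm (W - n%:R^-1 *: const_mx 1) ^+ 2 * fsq (cons_err Z).
Proof.
rewrite cons_err_mulmx fsq_cols [X in _ <= _ * X]fsq_cols mulr_sumr.
by apply: ler_sum => j _; rewrite !colE -mulmxA fsq_mulmx_le_spectral.
Qed.
End Mixing.
End Consensus.

Section StepsizeArithmetic.
Variable R : realType.

Lemma stepsize_condition (rho a L : R) : 0 < a -> 0 < L ->
  (rho != 0 ->
     a <= Num.sqrt ((2 - rho ^+ 2) / (24 * rho ^+ 2 * (5 - rho ^+ 2))) * (1 - rho ^+ 2) / L) ->
  rho ^+ 2 < 1
  /\ 24 * rho ^+ 2 * (5 - rho ^+ 2) * (a ^+ 2 * L ^+ 2) <= (2 - rho ^+ 2) * (1 - rho ^+ 2) ^+ 2.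
Proof.
move=> a_gt0 L_gt0 step_le; have [rho0|rho_neq0] := eqVneq rho 0.
  by rewrite rho0 expr0n /= !(mulr0, mul0r, subr0) expr1n; split; lra.
move: (step_le rho_neq0).
set x := rho ^+ 2; set q := (2 - x) / (24 * x * (5 - x)).
have x_gt0 : 0 < x by rewrite exprn_even_gt0.
rewrite ler_pdivlMr // => aL_le.
have aL_gt0 : 0 < a * L by rewrite mulr_gt0.
have sqrt_q_ge0 : 0 <= Num.sqrt q by exact: sqrtr_ge0.
have x_lt1 : x < 1.
  rewrite ltNge; apply/negP => x_ge1.
  have : Num.sqrt q * (1 - x) <= 0 by rewrite mulr_ge0_le0 // subr_le0.
  lra.
split => //.
have q_eq : 24 * x * (5 - x) * q = 2 - x.
  by rewrite /q; field; rewrite !gt_eqF //; lra.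
have q_ge0 : 0 <= q by apply: divr_ge0; [lra | apply: mulr_ge0; lra].
have : (a * L) ^+ 2 <= (Num.sqrt q * (1 - x)) ^+ 2.
  rewrite ler_pXn2r // ?nnegrE //; first exact: ltW.
  by apply: mulr_ge0 => //; lra.
rewrite !exprMn sqr_sqrtr // => aL2_le.
by rewrite -q_eq -[X in _ <= X]mulrA ler_pM2l // mulr_gt0 //; lra.
Qed.

Lemma consensus_rate_le (x A : R) : 0 <= x -> x < 1 -> 0 <= A ->
  24 * x * (5 - x) * A <= (2 - x) * (1 - x) ^+ 2 ->
  3 * x / (2 + x) + 15 / 2 * x * A / (1 - x) <= (1 + x) / 2.
Proof.
move=> x_ge0 x_lt1 A_ge0 A_le.
have k_gt0 : 0 < 48 * (5 - x) * (2 + x) * (1 - x) by rewrite !mulr_gt0 //; lra.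
rewrite -(ler_pM2l k_gt0).
have -> : 48 * (5 - x) * (2 + x) * (1 - x) * (3 * x / (2 + x) + 15 / 2 * x * A / (1 - x))
        = 144 * x * (5 - x) * (1 - x) + 15 * (2 + x) * (24 * x * (5 - x) * A).
  by field; apply/andP; split; rewrite gt_eqF //; lra.
have -> : 48 * (5 - x) * (2 + x) * (1 - x) * ((1 + x) / 2)
        = 24 * (5 - x) * (2 + x) * (1 - x) * (1 + x) by field.
have : 15 * (2 + x) * (24 * x * (5 - x) * A) <= 15 * (2 + x) * ((2 - x) * (1 - x) ^+ 2).
  by rewrite ler_pM2l //; lra.
have gapE : 24 * (5 - x) * (2 + x) * (1 - x) * (1 + x) - 144 * x * (5 - x) * (1 - x)
            - 15 * (2 + x) * ((2 - x) * (1 - x) ^+ 2) = (1 - x) ^+ 2 * (2 - x) * (90 - 39 * x).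
  by ring.
have : 0 <= (1 - x) ^+ 2 * (2 - x) * (90 - 39 * x).
  by apply: mulr_ge0; [apply: mulr_ge0; [exact: sqr_ge0 | lra] | lra].
lra.
Qed.
End StepsizeArithmetic.

Lemma drr_inner_succ (R : realType) n m p W g (a : R) s (X : 'M[R]_(n, p)) l (l_lt_m : (l < m)%N) :
  drr_inner W g a s X l.+1 = drr_step W g a s (drr_inner W g a s X l) (Ordinal l_lt_m).
Proof.
rewrite /drr_inner (take_nth (Ordinal l_lt_m)) ?size_enum_ord // foldl_rcons.
by rewrite (nth_ord_enum (Ordinal l_lt_m) (Ordinal l_lt_m)).
Qed.

Section ShuffleExpectation.
Variables (R : realType) (n m p : nat).
Variables (F : 'I_n -> 'I_m -> 'rV[R]_p -> R) (g : 'I_n -> 'I_m -> 'rV[R]_p -> 'rV[R]_p).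
Hypothesis n_gt0 : (0 < n)%N.

(* The summand of [sigma_shuffle_sq], verbatim, so that the two agree by conversion. *)
Definition shuffle_bregman (a : R) (xs : 'rV[R]_p) (s : {ffun 'I_n -> 'S_m}) (l : 'I_m) : R :=
  let sb := fun x => n%:R^-1 * \sum_(i < n) F i (s i l) x in
  let gsb := n%:R^-1 *: \sum_(i < n) g i (s i l) xs in
  let y := xbar_star g a s xs l in
  sb y - sb xs - vdot gsb (y - xs).

Lemma shuffle_bregmanE a xs s l :
  shuffle_bregman a xs s l
  = n%:R^-1 * \sum_i bregman (F i (s i l)) (g i (s i l)) xs (xbar_star g a s xs l).
Proof. by rewrite /shuffle_bregman /bregman vdotZl vdot_suml !sumrB !mulrBr. Qed.

Lemma Exp_shuffle_bregman_le a xs l :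
  Exp (fun s => shuffle_bregman a xs s l) <= sigma_shuffle_sq F g a xs.
Proof. exact: (le_bigmax _ (fun l => Exp (fun s => shuffle_bregman a xs s l))). Qed.

Lemma Exp_sum_perm_app (h : 'I_n -> 'I_m -> R) (l : 'I_m) :
  Exp (fun s : {ffun 'I_n -> 'S_m} => \sum_i h i (s i l)) = m%:R^-1 * \sum_i \sum_j h i j.
Proof.
rewrite Exp_sum mulr_sumr; apply: eq_bigr => i _.
by rewrite (Exp_ffun_app i 1%g (fun s : 'S_m => h i (s l))) Exp_perm_app.
Qed.

Lemma Exp_vsq_grad_perm (xs : 'rV[R]_p) (l : 'I_m) :
  Exp (fun s : {ffun 'I_n -> 'S_m} => \sum_i vsq (g i (s i l) xs)) = n%:R * sigma_star_sq g xs.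
Proof.
rewrite (Exp_sum_perm_app (fun i j => vsq (g i j xs))) /sigma_star_sq natrM invfM.
by rewrite [m%:R^-1 / n%:R]mulrC !mulrA mulfV ?mul1r // pnatr_eq0 -lt0n.
Qed.

End ShuffleExpectation.

Section DRRStep.
Variables (R : realType) (n m p : nat).
Variables (F : 'I_n -> 'I_m -> 'rV[R]_p -> R) (g : 'I_n -> 'I_m -> 'rV[R]_p -> 'rV[R]_p).
Variables (mu L : R) (W : 'M[R]_n).
Hypotheses (n_gt0 : (0 < n)%N) (mu_ge0 : 0 <= mu) (L_gt0 : 0 < L)
  (F_sc : forall i l, strongly_convex_with mu (F i l) (g i l))
  (g_lip : forall i l, lipschitz_with L (g i l))
  (W_sym : W^T = W) (W_stoch : forall i, \sum_(j < n) W i j = 1).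

Lemma fsq_grad_matrix_le (s : {ffun 'I_n -> 'S_m}) X (l : 'I_m) (y z : 'rV[R]_p) :
  fsq (\matrix_(i < n) g i (s i l) (row i X))
  <= 5 / 2 * L ^+ 2 * (fsq (cons_err X) + n%:R * vsq (avg_row X - y))
     + 10 * L * \sum_i bregman (F i (s i l)) (g i (s i l)) z y
     + 5 * \sum_i vsq (g i (s i l) z).
Proof.
rewrite fsq_rows; under eq_bigr do rewrite rowK.
apply: le_trans (ler_sum _ (fun i _ => vsq_grad_le L_gt0
  (fun x y => strongly_convex_bregman_ge0 x y mu_ge0 (F_sc i (s i l))) (g_lip i (s i l))
  (row i X) y z)) _.
by rewrite 2!big_split /= -!mulr_sumr sum_vsq_row_sub.
Qed.

Lemma fsq_cons_err_drr_step (a : R) (s : {ffun 'I_n -> 'S_m}) X (l : 'I_m) (y z : 'rV[R]_p) :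
  let x := spectral_norm (W - n%:R^-1 *: const_mx 1) ^+ 2 in
  x < 1 -> 24 * x * (5 - x) * (a ^+ 2 * L ^+ 2) <= (2 - x) * (1 - x) ^+ 2 ->
  fsq (cons_err (drr_step W g a s X l))
  <= (1 + x) / 2 * fsq (cons_err X)
     + 30 * a ^+ 2 * n%:R * L ^+ 2 / (1 - x) * vsq (avg_row X - y)
     + 15 * x * a ^+ 2 / (1 - x) * \sum_i vsq (g i (s i l) z)
     + 30 * x * L * a ^+ 2 / (1 - x) * \sum_i bregman (F i (s i l)) (g i (s i l)) z y.
Proof.
move=> x x_lt1 step_le; have x_ge0 : 0 <= x := sqr_ge0 _.
set G := \matrix_(i < n) g i (s i l) (row i X); set P := fsq (cons_err X); set V := vsq _.
set S := \sum_i vsq _; set D := \sum_i bregman _ _ _ _.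
have P_ge0 : 0 <= P := fsq_ge0 _; have V_ge0 : 0 <= V := vsq_ge0 _.
have mixing : fsq (cons_err (drr_step W g a s X l)) <= x * fsq (cons_err X - a *: cons_err G).
  by rewrite /drr_step -cons_errBZ; exact: fsq_cons_err_mulmx_le.
have young : fsq (cons_err X - a *: cons_err G) <= 3 / (2 + x) * P + 3 / (1 - x) * a ^+ 2 * fsq G.
  have c_gt0 : 0 < (1 - x) / (2 + x) by rewrite divr_gt0 //; lra.
  apply: le_trans (fsq_subZ_le_young _ _ _ c_gt0) _.
  have -> : 1 + (1 - x) / (2 + x) = 3 / (2 + x) by field; rewrite gt_eqF //; lra.
  have -> : 1 + ((1 - x) / (2 + x))^-1 = 3 / (1 - x).
    by rewrite invf_div; field; rewrite gt_eqF //; lra.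
  rewrite lerD2l ler_wpM2l ?fsq_cons_err_le // mulr_ge0 ?sqr_ge0 // divr_ge0 //; lra.
have grad := fsq_grad_matrix_le s X l y z; rewrite -/G -/P -/V -/S -/D in grad.
have rate := consensus_rate_le x_ge0 x_lt1 (mulr_ge0 (sqr_ge0 a) (sqr_ge0 L)) step_le.
set B := 3 * x * a ^+ 2 / (1 - x).
have B_ge0 : 0 <= B.
  apply: divr_ge0; last lra.
  by apply: mulr_ge0; [apply: mulr_ge0 => //; lra | exact: sqr_ge0].
have V_coef_le : B * (5 / 2 * L ^+ 2 * n%:R) <= 30 * a ^+ 2 * n%:R * L ^+ 2 / (1 - x).
  set K := a ^+ 2 * L ^+ 2 * n%:R / (1 - x).
  have K_ge0 : 0 <= K.
    apply: divr_ge0; last lra.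
    by rewrite mulr_ge0 ?ler0n // mulr_ge0 ?sqr_ge0.
  have -> : B * (5 / 2 * L ^+ 2 * n%:R) = 15 / 2 * (x * K) by rewrite /B /K; ring.
  have -> : 30 * a ^+ 2 * n%:R * L ^+ 2 / (1 - x) = 30 * K by rewrite /K; ring.
  have : 0 <= (1 - x) * K by rewrite mulr_ge0 //; lra.
  lra.
have expand : 3 * x / (2 + x) * P + B * (5 / 2 * L ^+ 2 * (P + n%:R * V) + 10 * L * D + 5 * S)
  = (3 * x / (2 + x) + 15 / 2 * x * (a ^+ 2 * L ^+ 2) / (1 - x)) * P
    + B * (5 / 2 * L ^+ 2 * n%:R) * V
    + 15 * x * a ^+ 2 / (1 - x) * S + 30 * x * L * a ^+ 2 / (1 - x) * D.
  by rewrite /B; ring.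
have := ler_wpM2l x_ge0 young; have := ler_wpM2l B_ge0 grad.
have := ler_wpM2r P_ge0 rate; have := ler_wpM2r V_ge0 V_coef_le.
have -> : x * (3 / (2 + x) * P + 3 / (1 - x) * a ^+ 2 * fsq G) = 3 * x / (2 + x) * P + B * fsq G.
  by rewrite /B; ring.
lra.
Qed.

Lemma fsq_cons_err_drr_inner_succ (a : R) (s : {ffun 'I_n -> 'S_m}) X l (l_lt_m : (l < m)%N)
    (xs : 'rV[R]_p) :
  let x := spectral_norm (W - n%:R^-1 *: const_mx 1) ^+ 2 in
  let Xl := drr_inner W g a s X in
  x < 1 -> 24 * x * (5 - x) * (a ^+ 2 * L ^+ 2) <= (2 - x) * (1 - x) ^+ 2 ->
  fsq (cons_err (Xl l.+1))
  <= (1 + x) / 2 * fsq (cons_err (Xl l))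
     + 30 * a ^+ 2 * n%:R * L ^+ 2 / (1 - x) * vsq (avg_row (Xl l) - xbar_star g a s xs l)
     + 15 * x * a ^+ 2 / (1 - x) * \sum_i vsq (g i (s i (Ordinal l_lt_m)) xs)
     + 30 * x * L * a ^+ 2 / (1 - x) * (n%:R * shuffle_bregman F g a xs s (Ordinal l_lt_m)).
Proof.
move=> x Xl x_lt1 step_le; rewrite /Xl drr_inner_succ shuffle_bregmanE mulVKf.
  exact: fsq_cons_err_drr_step.
by rewrite pnatr_eq0 -lt0n.
Qed.
End DRRStep.

Theorem lemma7 (R : realType) (n m p : nat) (n_gt0 : (0 < n)%N) (m_gt0 : (0 < m)%N)
  (p_gt0 : (0 < p)%N)
  (F : 'I_n -> 'I_m -> 'rV[R]_p -> R) (g : 'I_n -> 'I_m -> 'rV[R]_p -> 'rV[R]_p)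
  (mu L : R) (W : 'M[R]_n) (E : rel 'I_n)
  (X0 : 'M[R]_(n, p)) (alpha : nat -> R) (xs : 'rV[R]_p) :
  (* graph: undirected, connected; W nonnegative, symmetric, stochastic, compliant *)
  (forall i j, E i j = E j i) -> (forall i, ~~ E i i) -> (forall i j, connect E i j) ->
  (forall i j, 0 <= W i j) -> W^T = W -> (forall i, \sum_(j < n) W i j = 1) ->
  (forall i j, i != j -> (0 < W i j) = E i j) ->
  (* smoothness and strong convexity *)
  0 < mu -> mu <= L ->
  (forall i l, is_gradient (F i l) (g i l)) ->
  (forall i l, strongly_convex_with mu (F i l) (g i l)) ->
  (forall i l, lipschitz_with L (g i l)) ->
  (* xs minimizes f = (1/n) sum_i (1/m) sum_l f_{i,l} *)
  (forall x, n%:R^-1 * \sum_(i < n) (m%:R^-1 * \sum_(l < m) F i l xs)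
             <= n%:R^-1 * \sum_(i < n) (m%:R^-1 * \sum_(l < m) F i l x)) ->
  (forall t, 0 < alpha t) ->
  (let rho := spectral_norm (W - n%:R^-1 *: const_mx 1) in
   forall t, rho != 0 ->
     alpha t <= Num.sqrt ((2 - rho ^+ 2) / (24 * rho ^+ 2 * (5 - rho ^+ 2)))
                * (1 - rho ^+ 2) / L) ->
  let rho := spectral_norm (W - n%:R^-1 *: const_mx 1) in
  forall (t l : nat), (l < m)%N ->
  let Xl := fun (om : sample n m t) (k : nat) =>
    drr_inner W g (alpha t) (om ord_max) (drr_outer W g alpha X0 om t) k in
  Exp (fun om => fsq (cons_err (Xl om l.+1)))
  <= (1 + rho ^+ 2) / 2 * Exp (fun om => fsq (cons_err (Xl om l)))
     + 30 * alpha t ^+ 2 * n%:R * L ^+ 2 / (1 - rho ^+ 2)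
       * Exp (fun om => vsq (avg_row (Xl om l) - xbar_star g (alpha t) (om ord_max) xs l))
     + 15 * n%:R * rho ^+ 2 * alpha t ^+ 2 / (1 - rho ^+ 2)
       * (sigma_star_sq g xs + 2 * L * sigma_shuffle_sq F g (alpha t) xs).
Proof.
move=> _ _ _ _ W_sym W_stoch _ mu_gt0 mu_le_L _ F_sc g_lip _ alpha_gt0 step_le rho t l l_lt_m.
cbv zeta; have L_gt0 : 0 < L := lt_le_trans mu_gt0 mu_le_L.
have [x_lt1 step_cond] := stepsize_condition (alpha_gt0 t) L_gt0 (step_le t).
pose lo := Ordinal l_lt_m.
have per_sample (om : sample n m t) :=
  fsq_cons_err_drr_inner_succ n_gt0 (ltW mu_gt0) L_gt0 F_sc g_lip W_sym W_stoch (om ord_max)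
    (drr_outer W g alpha X0 om t) l_lt_m xs x_lt1 step_cond.
apply: le_trans (ler_Exp per_sample) _; rewrite !ExpD !ExpZ.
set x := rho ^+ 2 in x_lt1 step_cond *; set a := alpha t in step_cond *.
pose s1 : {ffun 'I_n -> 'S_m} := [ffun=> 1%g].
rewrite (Exp_ffun_app ord_max s1 (fun s => \sum_i vsq (g i (s i lo) xs))) Exp_vsq_grad_perm //.
rewrite (Exp_ffun_app ord_max s1 (fun s => shuffle_bregman F g a xs s lo)).
have coef_ge0 : 0 <= 30 * x * L * a ^+ 2 / (1 - x).
  apply: divr_ge0; last lra.
  by rewrite mulr_ge0 ?sqr_ge0 // mulr_ge0 ?(ltW L_gt0) // mulr_ge0 ?sqr_ge0.
have := ler_wpM2l coef_ge0 (ler_wpM2l (ler0n _ n) (Exp_shuffle_bregman_le F g a xs lo)).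
lra.
Qed.
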